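(* Let $\gamma>0$, $\Gamma_\infty>0$, $R\in\mathbb{N}$, and for $i\in\mathcal{N}=\{1,\dots,N\}$ let $d_i\in\mathbb{N}$, $\delta_i>0$, $\tau^i_{\max}>0$ satisfy \[ \delta_i+\frac{d_i}{R}<\frac{\gamma}{2\Gamma_\infty}\qquad\text{for all } i\in\mathcal{N}. \] Set $\xi_i:=2\Gamma_\infty d_i/R$, $\eta_i:=\gamma-2\Gamma_\infty\delta_i$ and \[ \tilde\omega:=\min_{i\in\mathcal{N}}\left(\eta_i-\frac{W(\xi_i\tau^i_{\max}e^{\eta_i\tau^i_{\max}})}{\tau^i_{\max}}\right),\qquad \kappa(\omega):=\max_{i\in\mathcal{N}}\left(\delta_i+\frac{d_ie^{\omega\tau^i_{\max}}}{R}\right). \] Then $\tilde\omega>0$, and for $\omega\in\mathbb{R}$, the condition $0<\omega\le\gamma-2\Gamma_\infty\kappa(\omega)$ holds if and only if $0<\omega\le\tilde\omega$.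
   Context: $W$ denotes the Lambert $W$-function on $[0,\infty)$: $W(y)$ is the unique solution $x\ge0$ of $xe^x=y$. (In the paper, $d_i$ are node degrees of a connected graph, $\gamma\le\lambda_2(L)$ and $\Gamma_\infty=\sup_{t\ge0}\|e^{\gamma t}(e^{-Lt}-\mathbf{1}\bar{\mathbf{1}})\|_\infty$, but the statement only uses positivity of these quantities.) *)

From Stdlib Require Import Reals Lra Lia ClassicalEpsilon.
Open Scope R_scope.

(* Lambert W on [0,oo): W y is the unique x >= 0 with x * exp x = y
   (chosen by Hilbert's epsilon; the value for y < 0 is irrelevant). *)
Definition LambertW (y : R) : R :=
  epsilon (inhabits 0%R) (fun x => 0 <= x /\ x * exp x = y).

Fixpoint min_upto (f : nat -> R) (n : nat) : R :=
  match n with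
  | O => f O
  | S m => Rmin (f (S m)) (min_upto f m)
  end.

Fixpoint max_upto (f : nat -> R) (n : nat) : R :=
  match n with
  | O => f O
  | S m => Rmax (f (S m)) (max_upto f m)
  end.

(* Each agent contributes the constraint [omega + xi_i e^(omega tau_i) <= eta_i]
   on omega.  Its left-hand side is strictly increasing in omega, so the
   constraint cuts out a half-line (-oo, w_i], and solving the equality case
   gives w_i = eta_i - W(xi_i tau_i e^(eta_i tau_i)) / tau_i.  The condition
   [kappa omega <= ...] is the conjunction of these constraints, i.e.
   omega <= min_i w_i; and w_i > 0 because at omega = 0 the left-hand side is
   xi_i < eta_i, which is the hypothesis on delta_i + d_i / R. *)

From Stdlib Require Import Reals Lra Lia ClassicalEpsilon.
Open Scope R_scope.

Lemma LambertW_spec (y : R) :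
  0 <= y -> 0 <= LambertW y /\ LambertW y * exp (LambertW y) = y.
Proof.
  intro hy; unfold LambertW; apply epsilon_spec.
  destruct (Req_dec y 0) as [->|hy0].
  - exists 0; split; [lra | ring].
  - assert (hcont : continuity (fun x => x * exp x - y)).
    { apply continuity_minus.
      - apply continuity_mult; apply derivable_continuous;
          [apply derivable_id | apply derivable_exp].
      - apply continuity_const; intros ? ?; reflexivity. }
    pose proof (exp_ineq1_le y).
    assert (hneg : (fun x => x * exp x - y) 0 < 0) by (simpl; rewrite Rmult_0_l; lra).
    assert (hpos : 0 < (fun x => x * exp x - y) y) by (simpl; nra).
    destruct (IVT _ 0 y hcont ltac:(lra) hneg hpos) as [x [hx hxy]].
    exists x; split; lra.
Qed.

Lemma le_min_upto (f : nat -> R) (n : nat) (c : R) :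
  c <= min_upto f n <-> forall i, (i <= n)%nat -> c <= f i.
Proof.
  induction n as [|n IHn]; simpl.
  - split; [intros h i hi; replace i with 0%nat by lia; exact h | intros h; apply h; lia].
  - unfold Rmin; destruct (Rle_dec _ _); split.
    + intros h i hi; destruct (Nat.eq_dec i (S n)) as [->|]; [exact h|].
      apply IHn; [lra | lia].
    + intros h; apply h; lia.
    + intros h i hi; destruct (Nat.eq_dec i (S n)) as [->|]; [lra|].
      apply IHn; [exact h | lia].
    + intros h; apply IHn; intros i hi; apply h; lia.
Qed.

Lemma lt_min_upto (f : nat -> R) (n : nat) (c : R) :
  (forall i, (i <= n)%nat -> c < f i) -> c < min_upto f n.
Proof.
  induction n as [|n IHn]; simpl; intros h; [apply h; lia|].
  unfold Rmin; destruct (Rle_dec _ _); [apply h; lia|].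
  apply IHn; intros i hi; apply h; lia.
Qed.

Lemma max_upto_le (f : nat -> R) (n : nat) (c : R) :
  max_upto f n <= c <-> forall i, (i <= n)%nat -> f i <= c.
Proof.
  induction n as [|n IHn]; simpl.
  - split; [intros h i hi; replace i with 0%nat by lia; exact h | intros h; apply h; lia].
  - unfold Rmax; destruct (Rle_dec _ _); split.
    + intros h i hi; destruct (Nat.eq_dec i (S n)) as [->|]; [lra|].
      apply IHn; [exact h | lia].
    + intros h; apply IHn; intros i hi; apply h; lia.
    + intros h i hi; destruct (Nat.eq_dec i (S n)) as [->|]; [exact h|].
      apply IHn; [lra | lia].
    + intros h; apply h; lia.
Qed.

Lemma le_sub_scale_max_upto (f : nat -> R) (n : nat) (a c x : R) :
  0 < c -> x <= a - c * max_upto f n <-> forall i, (i <= n)%nat -> x <= a - c * f i.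
Proof.
  intro hc.
  assert (hdiv : forall y, x <= a - c * y <-> y <= (a - x) / c).
  { intro y; assert (hq : c * ((a - x) / c) = a - x) by (field; lra).
    split; intro h; nra. }
  rewrite hdiv, max_upto_le.
  split; intros h i hi; apply hdiv, h, hi.
Qed.

Section LambertThreshold.

Variables xi eta tau : R.
Hypothesis hxi : 0 <= xi.
Hypothesis htau : 0 < tau.

Definition lambert_threshold : R :=
  eta - LambertW (xi * tau * exp (eta * tau)) / tau.

Lemma plus_scaled_exp_increasing (a b : R) :
  a < b -> a + xi * exp (a * tau) < b + xi * exp (b * tau).
Proof.
  intro hab.
  assert (exp (a * tau) < exp (b * tau)) by (apply exp_increasing; nra).
  nra.
Qed.

Lemma lambert_threshold_root :
  lambert_threshold + xi * exp (lambert_threshold * tau) = eta.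
Proof.
  assert (hy : 0 <= xi * tau * exp (eta * tau)).
  { pose proof (exp_pos (eta * tau)); apply Rmult_le_pos; [apply Rmult_le_pos|]; lra. }
  destruct (LambertW_spec _ hy) as [hW0 hWe].
  unfold lambert_threshold; set (w := LambertW _) in *.
  pose proof (exp_pos w).
  replace ((eta - w / tau) * tau) with (eta * tau + - w) by (field; lra).
  rewrite exp_plus, exp_Ropp.
  replace (xi * (exp (eta * tau) * / exp w))
    with (xi * tau * exp (eta * tau) / (tau * exp w)) by (field; lra).
  rewrite <- hWe; field; lra.
Qed.

Lemma le_lambert_threshold (om : R) :
  om + xi * exp (om * tau) <= eta <-> om <= lambert_threshold.
Proof.
  pose proof lambert_threshold_root.
  split; intro h.
  - destruct (Rle_or_lt om lambert_threshold) as [|hlt]; [assumption|].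
    pose proof (plus_scaled_exp_increasing _ _ hlt); lra.
  - destruct h as [hlt | ->]; [|lra].
    pose proof (plus_scaled_exp_increasing _ _ hlt); lra.
Qed.

Lemma lambert_threshold_pos : xi < eta -> 0 < lambert_threshold.
Proof.
  intro hlt; apply Rnot_le_lt; intro hle.
  pose proof lambert_threshold_root as hroot.
  destruct hle as [hneg | hzero].
  - pose proof (plus_scaled_exp_increasing _ _ hneg) as hmono.
    rewrite Rmult_0_l, exp_0 in hmono; lra.
  - rewrite hzero, Rmult_0_l, exp_0 in hroot; lra.
Qed.

End LambertThreshold.

Theorem lemma5 (gamma Gamma_inf : R) (Rn N : nat)
  (d : nat -> nat) (delta tau_max : nat -> R)
  (hgamma : 0 < gamma) (hGamma : 0 < Gamma_inf)
  (hR : (0 < Rn)%nat) (hN : (0 < N)%nat)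
  (hdelta : forall i, (i < N)%nat -> 0 < delta i)
  (htau : forall i, (i < N)%nat -> 0 < tau_max i)
  (hcond : forall i, (i < N)%nat ->
     delta i + INR (d i) / INR Rn < gamma / (2 * Gamma_inf)) :
  let xi := fun i => 2 * Gamma_inf * INR (d i) / INR Rn in
  let eta := fun i => gamma - 2 * Gamma_inf * delta i in
  let omega_t := min_upto (fun i =>
        eta i - LambertW (xi i * tau_max i * exp (eta i * tau_max i)) / tau_max i)
        (N - 1) in
  let kappa := fun omega : R => max_upto (fun i =>
        delta i + INR (d i) * exp (omega * tau_max i) / INR Rn) (N - 1) in
  0 < omega_t /\
  forall omega : R,
    (0 < omega /\ omega <= gamma - 2 * Gamma_inf * kappa omega) <->
    (0 < omega /\ omega <= omega_t).
Proof.
  intros xi eta omega_t kappa.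
  assert (hRn : 0 < INR Rn) by (apply lt_0_INR; lia).
  assert (hxi : forall i, 0 <= xi i).
  { intro i; pose proof (pos_INR (d i)); unfold xi.
    apply Rmult_le_pos; [nra | left; apply Rinv_0_lt_compat; lra]. }
  assert (htau' : forall i, (i <= N - 1)%nat -> 0 < tau_max i) by (intros; apply htau; lia).
  assert (hconstraint : forall i om, gamma - 2 * Gamma_inf *
      (delta i + INR (d i) * exp (om * tau_max i) / INR Rn) - om
      = eta i - (om + xi i * exp (om * tau_max i))).
  { intros; unfold xi, eta; field; lra. }
  split.
  - apply lt_min_upto; intros i hi.
    apply lambert_threshold_pos; [apply hxi | apply htau'; exact hi |].
    specialize (hcond i ltac:(lia)).
    apply (Rmult_lt_compat_l (2 * Gamma_inf)) in hcond; [|lra].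
    replace (2 * Gamma_inf * (gamma / (2 * Gamma_inf))) with gamma in hcond by (field; lra).
    unfold xi, eta; replace (2 * Gamma_inf * INR (d i) / INR Rn)
      with (2 * Gamma_inf * (INR (d i) / INR Rn)) by (field; lra); lra.
  - intro om; apply and_iff_compat_l.
    unfold kappa, omega_t; rewrite le_sub_scale_max_upto, le_min_upto by lra.
    split; intros h i hi; specialize (h i hi); pose proof (hconstraint i om).
    + apply (le_lambert_threshold _ _ _ (hxi i) (htau' i hi)); lra.
    + apply (le_lambert_threshold _ _ _ (hxi i) (htau' i hi)) in h; lra.
Qed.
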